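(* Let $s$ and $r$ be positive integers with $s\le r$, and let $\alpha_s=(4^s-1)^{1/s}$. Then the number $f_s(r)$ of $s$-bad pairs of binary vectors of length $r$ satisfies $$f_s(r)\le 2s\,4^{s-1}\alpha_s^{\,r}.$$
   Context: Let ${\mathbf e}_1,\ldots,{\mathbf e}_s$ denote the standard basis vectors of length $s$ (binary vectors with a single $1$) and $\mathbf{0}_s$ the zero vector of length $s$. A pair of binary vectors ${\mathbf x}=(x_0,\ldots,x_{r-1})$, ${\mathbf y}=(y_0,\ldots,y_{r-1})\in\{0,1\}^r$ is called $s$-good if for every $h=1,\ldots,s$ there exists at least one pair of indices $(i,j)$ with $0\le i,j\le r-s$ such that $(x_i,\ldots,x_{i+s-1})={\mathbf e}_h$, $(x_j,\ldots,x_{j+s-1})=\mathbf{0}_s$, $(y_i,\ldots,y_{i+s-1})=\mathbf{0}_s$ and $(y_j,\ldots,y_{j+s-1})={\mathbf e}_h$. A pair is $s$-bad if it is not $s$-good. Pairs are ordered pairs, counted among all $4^r$ pairs $({\mathbf x},{\mathbf y})$. *)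

From mathcomp Require Import all_boot.
From Stdlib Require Import Reals.
Set Implicit Arguments.

Definition bvec (r : nat) := {ffun 'I_r -> bool}.

(* Entry x_k, with value false outside the range 0..r-1 (never used out of range). *)
Definition entry r (x : bvec r) (k : nat) : bool :=
  match insub k with Some j => x j | None => false end.

(* (x_i, ..., x_{i+s-1}) = e_h, with h encoded as k+1 for k : 'I_s
   (e_h has its single 1 in position h, i.e. offset k = h-1). *)
Definition win_is_e r (s : nat) (x : bvec r) (i : nat) (k : 'I_s) : bool :=
  [forall t : 'I_s, entry x (i + t) == (t == k)].

Arguments win_is_e {r} s x i k.

Definition win_is_0 r (s : nat) (x : bvec r) (i : nat) : bool :=
  [forall t : 'I_s, entry x (i + t) == false].

Arguments win_is_0 {r} s x i.

Definition s_good r (s : nat) (x y : bvec r) : bool :=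
  [forall k : 'I_s, [exists i : 'I_(r - s).+1, [exists j : 'I_(r - s).+1,
     [&& win_is_e s x i k, win_is_0 s x j, win_is_0 s y i & win_is_e s y j k]]]].

Arguments s_good {r} s x y.

Definition s_bad r (s : nat) (x y : bvec r) : bool := ~~ s_good s x y.

Arguments s_bad {r} s x y.

Definition f_bad (s r : nat) : nat :=
  #|[set p : bvec r * bvec r | s_bad s p.1 p.2]|.

Definition alpha (s : nat) : R :=
  Rpower (INR (4 ^ s) - 1) (1 / INR s).

From mathcomp Require Import all_boot.
From Stdlib Require Import Reals Lra.

(* Cut a word of length r = m s + t into m consecutive blocks of length s and
   a tail of length t.  A word none of whose windows equals a given pattern u
   has no block equal to u, so it is determined by m blocks from a set of
   |T|^s - 1 words and a free tail: there are at most (|T|^s - 1)^m |T|^t of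
   them.  A pair (x, y) of binary vectors is a word over the 4-letter alphabet
   bool * bool, and an s-bad pair must, for some h, avoid one of the two
   patterns (e_h, 0_s) and (0_s, e_h); a union bound over these 2s patterns
   gives 2 s (4^s - 1)^m 4^t <= 2 s 4^(s-1) alpha_s^r. *)

Section WindowAvoidance.
Variables (T : finType) (r s : nat).
Implicit Types (w : {ffun 'I_r -> T}) (u : {ffun 'I_s -> T}).

Definition letter w (k : nat) : option T := omap w (insub k).

Definition window_is w (i : nat) u : bool :=
  [forall t : 'I_s, letter w (i + t) == Some (u t)].

Definition avoiding u : {set {ffun 'I_r -> T}} :=
  [set w | [forall i : 'I_(r - s).+1, ~~ window_is w i u]].

Lemma letter_ord w k (lt_k_r : k < r) : letter w k = Some (w (Ordinal lt_k_r)).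
Proof. by rewrite /letter insubT. Qed.

Hypothesis s_gt0 : 0 < s.

Let m := r %/ s.
Let rest := r %% s.

Lemma block_end_le (b : 'I_m) : b * s + s <= r.
Proof.
rewrite -mulSnr (leq_trans _ (leq_divM r s)) // leq_mul2r.
by rewrite ltn_ord orbT.
Qed.

Lemma block_lt (b : 'I_m) (o : 'I_s) : b * s + o < r.
Proof. by rewrite (leq_trans _ (block_end_le b)) // ltn_add2l. Qed.

Lemma rest_lt (o : 'I_rest) : m * s + o < r.
Proof. by rewrite [X in _ < X](divn_eq r s) ltn_add2l. Qed.

Lemma block_start_lt (b : 'I_m) : b * s < (r - s).+1.
Proof.
rewrite ltnS leq_subRL; first by rewrite addnC block_end_le.
exact: leq_trans (leq_addl _ _) (block_end_le b).
Qed.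

Definition block_code w : {ffun 'I_m -> {ffun 'I_s -> T}} * {ffun 'I_rest -> T} :=
  ([ffun b => [ffun o => w (Ordinal (block_lt b o))]],
   [ffun o => w (Ordinal (rest_lt o))]).

Lemma block_code_inj : injective block_code.
Proof.
move=> w1 w2 [/ffunP eq_blocks /ffunP eq_rest]; apply/ffunP => j.
case: (ltnP j (m * s)) => [j_lt | j_ge].
- have b_lt : j %/ s < m by rewrite ltn_divLR.
  have o_lt : j %% s < s by rewrite ltn_mod.
  have -> : j = Ordinal (block_lt (Ordinal b_lt) (Ordinal o_lt)).
    by apply: val_inj; rewrite /= -divn_eq.
  by have /ffunP/(_ (Ordinal o_lt)) := eq_blocks (Ordinal b_lt); rewrite !ffunE.
- have o_lt : j - m * s < rest by rewrite ltn_subLR // -divn_eq.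
  have -> : j = Ordinal (rest_lt (Ordinal o_lt)) by apply: val_inj; rewrite /= subnKC.
  by have := eq_rest (Ordinal o_lt); rewrite !ffunE.
Qed.

Lemma avoiding_blocks u w b : w \in avoiding u -> (block_code w).1 b != u.
Proof.
rewrite inE => /forallP /(_ (Ordinal (block_start_lt b))); apply: contra.
rewrite ffunE => /eqP <-; apply/forallP => o.
by rewrite ffunE (letter_ord w _ (block_lt b o)).
Qed.

Lemma card_avoiding u :
  #|avoiding u| <= expn (expn #|T| s - 1) m * expn #|T| rest.
Proof.
rewrite -(card_imset _ block_code_inj).
have sub_code : block_code @: avoiding u \subset
                setX [set c | c \in ffun_on (predC1 u)] setT.
  apply/subsetP => _ /imsetP [w w_av ->]; rewrite !inE andbT.
  by apply/ffun_onP => b; rewrite inE avoiding_blocks.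
rewrite (leq_trans (subset_leq_card sub_code)) // cardsX cardsT cardsE.
by rewrite card_ffun_on !card_ffun !card_ord cardC1 card_ffun card_ord subn1.
Qed.

End WindowAvoidance.

Arguments letter {T r}.
Arguments window_is {T r s}.
Arguments avoiding {T} r {s}.

Lemma leq_card_bigcup {T I : finType} (F : I -> {set T}) :
  #|\bigcup_i F i| <= \sum_i #|F i|.
Proof.
elim/big_rec2: _ => [|i n U _ le_U]; first by rewrite cards0.
by rewrite (leq_trans (leq_card_setU (F i) U).1) ?leq_add2l.
Qed.

Definition pair_word {r} (p : bvec r * bvec r) : {ffun 'I_r -> bool * bool} :=
  [ffun j => (p.1 j, p.2 j)].

Lemma pair_word_inj r : injective (@pair_word r).
Proof.
move=> [x1 y1] [x2 y2] /ffunP eq_w.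
by congr pair; apply/ffunP => j; have := eq_w j; rewrite !ffunE => -[].
Qed.

Lemma window_pair_word r s (x y : bvec r) i (u : {ffun 'I_s -> bool * bool}) :
  window_is (pair_word (x, y)) i u ->
  forall o : 'I_s, (entry x (i + o), entry y (i + o)) = u o.
Proof.
move=> /forallP win o; move: (win o) => /eqP; rewrite /letter /entry.
by case: (insub (i + o)) => [j|] //= [<-]; rewrite ffunE.
Qed.

Definition e_zero_pattern {s} (k : 'I_s) : {ffun 'I_s -> bool * bool} :=
  [ffun o => (o == k, false)].

Definition zero_e_pattern {s} (k : 'I_s) : {ffun 'I_s -> bool * bool} :=
  [ffun o => (false, o == k)].

Lemma window_e_zero r s (x y : bvec r) i (k : 'I_s) :
  window_is (pair_word (x, y)) i (e_zero_pattern k) ->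
  win_is_e s x i k && win_is_0 s y i.
Proof.
move=> /window_pair_word win; apply/andP; split; apply/forallP => o;
  by have := win o; rewrite ffunE => -[ex ey]; rewrite ?ex ?ey.
Qed.

Lemma window_zero_e r s (x y : bvec r) i (k : 'I_s) :
  window_is (pair_word (x, y)) i (zero_e_pattern k) ->
  win_is_0 s x i && win_is_e s y i k.
Proof.
move=> /window_pair_word win; apply/andP; split; apply/forallP => o;
  by have := win o; rewrite ffunE => -[ex ey]; rewrite ?ex ?ey.
Qed.

Lemma s_bad_avoiding r s (x y : bvec r) :
  s_bad s x y -> exists k : 'I_s,
    pair_word (x, y) \in avoiding r (e_zero_pattern k) :|: avoiding r (zero_e_pattern k).
Proof.
rewrite /s_bad /s_good negb_forall => /existsP [k no_ij]; exists k.
rewrite !inE; apply/orP.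
case: (boolP [exists i : 'I_(r - s).+1,
                window_is (pair_word (x, y)) i (e_zero_pattern k)]) => [|no_i].
- move=> /existsP [i /window_e_zero /andP [xi yi]]; right.
  apply/forallP => j; apply: contra no_ij => /window_zero_e /andP [xj yj].
  by apply/existsP; exists i; apply/existsP; exists j; rewrite xi xj yi yj.
- by left; rewrite -negb_exists.
Qed.

Lemma f_bad_le s r : 0 < s ->
  f_bad s r <= 2 * s * expn 4 (s - 1) * expn (expn 4 s - 1) (r %/ s).
Proof.
move=> s_gt0; set bound := expn (expn 4 s - 1) (r %/ s) * expn 4 (r %% s).
pose A (k : 'I_s) := avoiding r (e_zero_pattern k) :|: avoiding r (zero_e_pattern k).
have card_A k : #|A k| <= 2 * bound.
  rewrite (leq_trans (leq_card_setU _ _).1) // mul2n -addnn.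
  by rewrite leq_add // (leq_trans (card_avoiding _ _ _ s_gt0 _)) ?card_prod ?card_bool.
have bad_sub : pair_word @: [set p | s_bad s p.1 p.2] \subset \bigcup_k A k.
  apply/subsetP => w /imsetP [[x y]]; rewrite inE => /s_bad_avoiding [k xy_k] ->.
  by apply/bigcupP; exists k.
rewrite /f_bad -(card_imset _ (@pair_word_inj r)).
apply: (leq_trans (subset_leq_card bad_sub)).
apply: (leq_trans (leq_card_bigcup A)).
apply: (@leq_trans (\sum_(k < s) 2 * bound)); first exact: leq_sum.
have tail_le : expn 4 (r %% s) <= expn 4 (s - 1).
  by apply: leq_pexp2l => //; rewrite -ltnS subn1 prednK // ltn_mod.
rewrite sum_nat_const card_ord /bound -!mulnA mulnCA !leq_mul2l.
by rewrite [X in X <= _]mulnC leq_mul2r tail_le !orbT.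
Qed.

Lemma Nat_powE a b : Nat.pow a b = expn a b.
Proof. by elim: b => [|b IH] //=; rewrite expnS IH. Qed.

Lemma pow_le_alpha s r : 0 < s -> (INR (expn 4 s - 1) ^ (r %/ s) <= alpha s ^ r)%R.
Proof.
move=> s_gt0.
have four_s_ge1 : 1 <= expn 4 s by rewrite expn_gt0.
have base_eq : INR (expn 4 s - 1) = (INR (4 ^ s) - 1)%R.
  by rewrite minus_INR ?Nat_powE //; apply/leP.
have base_ge1 : (1 <= INR (expn 4 s - 1))%R.
  apply: (le_INR 1); apply/leP.
  by rewrite leq_subRL // (leq_trans _ (@leq_pexp2l 4 1 s isT s_gt0)).
have s_pos : (0 < INR s)%R by apply: lt_0_INR; apply/ltP.
rewrite /alpha -base_eq -[X in (_ <= X)%R]Rpower_pow; last exact: exp_pos.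
rewrite Rpower_mult -Rpower_pow; last lra.
apply: Rle_Rpower => //.
have quot_le : (INR (r %/ s) * INR s <= INR r)%R.
  by rewrite -mult_INR; apply: le_INR; apply/leP; exact: leq_divM.
apply: (Rmult_le_reg_r (INR s)) => //.
by have -> : (1 / INR s * INR r * INR s = INR r)%R by field; lra.
Qed.

Theorem lemma3 (s r : nat) (hs : (0 < s)%N) (hsr : (s <= r)%N) :
  (INR (f_bad s r) <= 2 * INR s * INR (4 ^ (s - 1)) * (alpha s) ^ r)%R.
Proof.
apply: (Rle_trans _ (INR (2 * s * expn 4 (s - 1) * expn (expn 4 s - 1) (r %/ s)))).
  by apply: le_INR; apply/leP; exact: f_bad_le.
have INR_2 : INR 2 = 2%R by rewrite INR_IZR_INZ.
rewrite !mult_INR INR_2 -(Nat_powE 4 (s - 1)) -Nat_powE (pow_INR (expn 4 s - 1)).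
apply: Rmult_le_compat_l; last exact: pow_le_alpha.
by apply: Rmult_le_pos; [apply: Rmult_le_pos; [lra|]|]; apply: pos_INR.
Qed.
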